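(* Let $\mathcal H$ be a graded connected Hopf algebra over a field $\Bbbk$ and let $\varphi,\varphi',\psi,\psi'$ be characters on $\mathcal H$. Suppose that either $\psi^{-1}\varphi=(\psi')^{-1}\varphi'$ or $\varphi\psi^{-1}=\varphi'(\psi')^{-1}$. Then $S(\varphi,\psi)=S(\varphi',\psi')$ and $I(\varphi,\psi)=I(\varphi',\psi')$.
   Context: $\mathcal H=\bigoplus_{n\ge0}\mathcal H_n$ is graded connected with finite-dimensional components; characters are algebra morphisms to $\Bbbk$, multiplied by convolution $\varphi\psi=m_\Bbbk\circ(\varphi\otimes\psi)\circ\Delta$, with inverse $\varphi^{-1}=\varphi\circ S$. For a linear functional $\varphi$, $\varphi_n=\varphi|_{\mathcal H_n}$. $S(\varphi,\psi)$ is the largest graded subcoalgebra of $\mathcal H$ on which $\varphi=\psi$; $I(\varphi,\psi)$ is the ideal of the graded dual $\mathcal H^*=\bigoplus_n(\mathcal H_n)^*$ generated by $\varphi_n-\psi_n$, $n\ge0$. *)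

(* A graded connected Hopf algebra H over a field K with
   finite-dimensional homogeneous components is encoded by a homogeneous
   basis and its structure constants. *)
From HB Require Import structures.
From mathcomp Require Import all_boot all_order all_algebra.
Set Implicit Arguments. Unset Strict Implicit. Unset Printing Implicit Defensive.
Import Order.TTheory GRing.Theory.
Local Open Scope ring_scope.

Definition hbasis (d : nat -> nat) := {n : nat & 'I_(d n)}.

Record gcHopf (K : fieldType) := GcHopf {
  hdim : nat -> nat;
  hone : 'I_(hdim 0);                      (* the basis element 1 of H_0 *)
  hmul : hbasis hdim -> hbasis hdim -> hbasis hdim -> K;
      (* hmul a b e = coefficient of e in a*b  (deg e = deg a + deg b) *)
  hcomul : hbasis hdim -> hbasis hdim -> hbasis hdim -> K;
      (* hcomul e a b = coefficient of a (x) b in Delta(e)  (deg a + deg b = deg e) *)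
  hanti : hbasis hdim -> hbasis hdim -> K
      (* hanti a a' = coefficient of a' in S(a)  (deg a' = deg a) *)
}.

Section Hopf.
Variables (K : fieldType) (H : gcHopf K).

Definition hB := hbasis (hdim H).
Definition bas (n : nat) (i : 'I_(hdim H n)) : hB := existT (fun m => 'I_(hdim H m)) n i.
Definition deg (b : hB) : nat := projT1 b.
Definition one : hB := bas (@hone K H).
Definition sdeg (n : nat) (F : hB -> K) : K := \sum_(i < hdim H n) F (bas i).

Definition mul := @hmul K H.
Definition comul := @hcomul K H.
Definition anti := @hanti K H.

Definition eps (b : hB) : K := (deg b == 0)%:R.

Definition gcHopf_axioms : Prop :=
  hdim H 0 = 1%N /\
  [/\ (* associativity *)
      forall a b c f, deg f = (deg a + deg b + deg c)%N ->
        sdeg (deg a + deg b) (fun e => mul a b e * mul e c f)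
        = sdeg (deg b + deg c) (fun e => mul b c e * mul a e f),
      forall a e, deg e = deg a ->
        mul one a e = (a == e)%:R /\ mul a one e = (a == e)%:R,
      (* coassociativity *)
      forall e a b c, (deg a + deg b + deg c)%N = deg e ->
        sdeg (deg a + deg b) (fun x => comul e x c * comul x a b)
        = sdeg (deg b + deg c) (fun x => comul e a x * comul x b c),
      (* counit *)
      forall e b, deg b = deg e ->
        sdeg 0 (fun x => eps x * comul e x b) = (b == e)%:R /\
        sdeg 0 (fun x => comul e b x * eps x) = (b == e)%:R &
      [/\ (* Delta is an algebra morphism *)
      comul one one one = 1,
      forall a b x y, (deg x + deg y)%N = (deg a + deg b)%N ->
        sdeg (deg a + deg b) (fun e => mul a b e * comul e x y)
        = \sum_(p < (deg a).+1) \sum_(q < (deg b).+1 | (p + q == deg x)%N)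
            sdeg p (fun a1 => sdeg (deg a - p) (fun a2 =>
            sdeg q (fun b1 => sdeg (deg b - q) (fun b2 =>
              comul a a1 a2 * comul b b1 b2 * mul a1 b1 x * mul a2 b2 y)))),
      (* antipode: m (S (x) id) Delta = eta eps *)
      forall e f, deg f = deg e ->
        \sum_(p < (deg e).+1) sdeg p (fun a => sdeg (deg e - p) (fun b =>
           comul e a b * sdeg p (fun a' => anti a a' * mul a' b f)))
        = eps e * (f == one)%:R &
      (* antipode: m (id (x) S) Delta = eta eps *)
      forall e f, deg f = deg e ->
        \sum_(p < (deg e).+1) sdeg p (fun a => sdeg (deg e - p) (fun b =>
           comul e a b * sdeg (deg e - p) (fun b' => anti b b' * mul a b' f)))
        = eps e * (f == one)%:R ]].

(* Linear functionals on H are given by their values on the basis. *)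
Definition functional := hB -> K.

Definition character (phi : functional) : Prop :=
  phi one = 1 /\
  forall a b, sdeg (deg a + deg b) (fun e => mul a b e * phi e) = phi a * phi b.

(* convolution  phi psi = m_K o (phi (x) psi) o Delta *)
Definition conv (phi psi : functional) : functional := fun e =>
  \sum_(p < (deg e).+1) sdeg p (fun a => sdeg (deg e - p) (fun b =>
     comul e a b * (phi a * psi b))).

(* phi^{-1} = phi o S *)
Definition cinv (phi : functional) : functional := fun e =>
  sdeg (deg e) (fun a => anti e a * phi a).

Definition gsubspace := forall n, {vspace 'rV[K]_(hdim H n)}.

(* value of a functional at the element sum_i v_i b_(n,i) of H_n *)
Definition fval (phi : functional) (n : nat) (v : 'rV[K]_(hdim H n)) : K :=
  \sum_(i < hdim H n) v 0 i * phi (bas i).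

(* the H_p (x) H_(n-p) component of Delta(v), v in H_n, as a matrix *)
Definition comulmx (n p : nat) (v : 'rV[K]_(hdim H n))
  : 'M[K]_(hdim H p, hdim H (n - p)) :=
  \matrix_(i, j) \sum_(k < hdim H n) v 0 k * comul (bas k) (bas i) (bas j).

(* M lies in U (x) V  (tensors of 'rV_m1 (x) 'rV_m2 represented as matrices) *)
Definition in_tensor (m1 m2 : nat) (U : {vspace 'rV[K]_m1})
  (V : {vspace 'rV[K]_m2}) (M : 'M[K]_(m1, m2)) : Prop :=
  exists r (X : 'M[K]_(r, m1)) (Y : 'M[K]_(r, m2)),
    [/\ forall k, row k X \in U, forall k, row k Y \in V & M = X^T *m Y].

Definition graded_subcoalgebra (C : gsubspace) : Prop :=
  forall n (v : 'rV[K]_(hdim H n)), v \in C n ->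
    forall p, (p <= n)%N -> in_tensor (C p) (C (n - p)%N) (@comulmx n p v).

Definition agree_on (phi psi : functional) (C : gsubspace) : Prop :=
  graded_subcoalgebra C /\
  forall n (v : 'rV[K]_(hdim H n)), v \in C n -> fval phi v = fval psi v.

(* C is S(phi,psi): the largest graded subcoalgebra on which phi = psi *)
Definition is_S (phi psi : functional) (C : gsubspace) : Prop :=
  agree_on phi psi C /\
  forall C', agree_on phi psi C' -> forall n, (C' n <= C n)%VS.

Definition in_graded_dual (f : functional) : Prop :=
  exists N, forall b, (N <= deg b)%N -> f b = 0.

Definition restr (n : nat) (phi : functional) : functional :=
  fun b => if deg b == n then phi b else 0.

Definition is_ideal (J : functional -> Prop) : Prop :=
  [/\ forall f, J f -> in_graded_dual f,
      J (fun _ => 0),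
      forall f g, J f -> J g -> J (fun b => f b + g b),
      forall (c : K) f, J f -> J (fun b => c * f b) &
      forall f g, in_graded_dual g -> J f -> J (conv g f) /\ J (conv f g)].

(* membership in the ideal of H^* generated by the phi_n - psi_n *)
Definition in_I (phi psi : functional) (f : functional) : Prop :=
  forall J, is_ideal J ->
    (forall n, J (fun b => restr n phi b - restr n psi b)) -> J f.

End Hopf.

From Pilot Require Import Defs.
From HB Require Import structures.
From mathcomp Require Import all_boot all_order all_algebra.
From mathcomp Require Import ring zify.
From Stdlib Require Import FunctionalExtensionality ClassicalEpsilon.
Set Implicit Arguments. Unset Strict Implicit. Unset Printing Implicit Defensive.
Import Order.TTheory GRing.Theory.

(* Convolution makes the characters a group, with unit eps and inverse
   psi^-1 = psi o S.  Say chi = psi^-1 phi = psi'^-1 phi' (the case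
   phi psi^-1 = phi' psi'^-1 is the mirror image).  Then phi = psi chi,
   psi = psi eps, phi' = psi' chi and psi' = psi' eps, so any relation R
   between functionals that is stable under left convolution satisfies
   R(phi, psi) -> R(chi, eps) -> R(phi', psi'), and conversely.  Two such
   relations are "phi = psi on the graded subcoalgebra C" (the coproduct of
   an element of C lies in C (x) C) and "every phi_n - psi_n lies in the
   ideal J" (the degree n part of a convolution is a sum of convolutions of
   homogeneous parts).  Hence phi, psi and phi', psi' agree on the same
   graded subcoalgebras, so S(phi, psi) = S(phi', psi'), and an ideal
   contains all phi_n - psi_n iff it contains all phi'_n - psi'_n, so
   I(phi, psi) = I(phi', psi'). *)

Lemma ex_maxn_bounded (P : nat -> Prop) N :
  (exists k, P k) -> (forall k, P k -> k <= N) ->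
  exists2 k, P k & forall j, P j -> j <= k.
Proof.
elim: N => [|N IHN] [k Pk] leP.
  by exists k => // j /leP; rewrite leqn0 => /eqP->.
have [PN1|notPN1] := classic (P N.+1); first by exists N.+1.
apply: IHN => [|j Pj]; first by exists k.
rewrite -ltnS ltn_neqAle leP // andbT; apply/eqP => eq_j.
by apply: notPN1; rewrite -eq_j.
Qed.

Local Open Scope ring_scope.

Lemma sum_triangle (R : nmodType) n (G : nat -> nat -> nat -> nat -> R) :
  \sum_(p < n.+1) \sum_(q < p.+1) G p q (p - q)%N (n - p)%N =
  \sum_(q < n.+1) \sum_(r < (n - q).+1) G (q + r)%N q r (n - q - r)%N.
Proof.
rewrite (eq_bigr (fun p : 'I_n.+1 =>
  \sum_(q < n.+1 | (q < p.+1)%N) G p q (p - q)%N (n - p)%N)) => [|p _]; last first.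
  by rewrite (big_ord_widen n.+1 (fun q => G p q (p - q)%N (n - p)%N)) ?ltn_ord.
rewrite (exchange_big_dep xpredT) //=; apply: eq_bigr => q _.
rewrite -(big_geq_mkord q n.+1 xpredT (fun p => G p q (p - q)%N (n - p)%N)).
rewrite -{1}(add0n q) big_addn subSn -1?ltnS // big_mkord; apply: eq_bigr => r _.
by rewrite addnK addnC subnDA.
Qed.

Section Convolution.
Variables (K : fieldType) (H : gcHopf K).
Implicit Types (f g h : functional H) (e : hB H).

Lemma hB_ind (P : hB H -> Prop) :
  (forall n (i : 'I_(hdim H n)), P (bas i)) -> forall e, P e.
Proof. by move=> Pbas [n i]; apply: Pbas. Qed.

Lemma eq_sdeg p (F G : hB H -> K) :
  (forall i : 'I_(hdim H p), F (bas i) = G (bas i)) -> sdeg p F = sdeg p G.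
Proof. by move=> eqFG; apply: eq_bigr => i _. Qed.

Lemma exchange_sdeg p q (F : hB H -> hB H -> K) :
  sdeg p (fun x => sdeg q (fun y => F x y)) = sdeg q (fun y => sdeg p (fun x => F x y)).
Proof. exact: exchange_big. Qed.

Lemma mulr_sdegl p c (F : hB H -> K) : sdeg p F * c = sdeg p (fun x => F x * c).
Proof. exact: mulr_suml. Qed.

Lemma sdeg_delta n (i : 'I_(hdim H n)) (F : hB H -> K) :
  sdeg n (fun b => (b == bas i)%:R * F b) = F (bas i).
Proof.
rewrite /sdeg (bigD1 i) //= eqxx mul1r big1 ?addr0 // => j neq_ji.
by rewrite /bas eq_Tagged (negbTE neq_ji) mul0r.
Qed.

Definition conv3_part f g h (D : hB H -> hB H -> hB H -> K) q r s :=
  sdeg q (fun a => sdeg r (fun b => sdeg s (fun c => D a b c * (f a * g b * h c)))).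

Lemma conv_convl f g h e : conv (conv f g) h e =
  \sum_(p < (deg e).+1) \sum_(q < p.+1)
    conv3_part f g h (fun a b c => sdeg p (fun x => comul e x c * comul x a b))
      q (p - q) (deg e - p).
Proof.
rewrite /conv /conv3_part /sdeg /=; apply: eq_bigr => p _.
under eq_bigr => x _ do under eq_bigr => c _ do rewrite mulrA mulr_sumr mulr_suml.
under eq_bigr => x _ do rewrite exchange_big.
rewrite exchange_big; apply: eq_bigr => q _.
under eq_bigr => x _ do under eq_bigr => c _ do (rewrite mulr_sumr mulr_suml;
  under eq_bigr => a _ do rewrite mulr_sumr mulr_suml).
under [RHS]eq_bigr => a _ do under eq_bigr => b _ do under eq_bigr => c _ do rewrite mulr_suml.
rewrite exchange_big; under eq_bigr => c _ do
  (rewrite exchange_big; under eq_bigr => a _ do rewrite exchange_big).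
rewrite exchange_big; under eq_bigr => a _ do rewrite exchange_big.
by do 4!(apply: eq_bigr => ? _); ring.
Qed.

Lemma conv_convr f g h e : conv f (conv g h) e =
  \sum_(q < (deg e).+1) \sum_(r < (deg e - q).+1)
    conv3_part f g h (fun a b c => sdeg (deg e - q) (fun y => comul e a y * comul y b c))
      q r (deg e - q - r).
Proof.
rewrite /conv /conv3_part /sdeg /=; apply: eq_bigr => q _.
under eq_bigr => a _ do under eq_bigr => y _ do (rewrite mulr_sumr mulr_sumr;
  under eq_bigr => r _ do (rewrite mulr_sumr mulr_sumr;
    under eq_bigr => b _ do rewrite mulr_sumr mulr_sumr)).
under [RHS]eq_bigr => r _ do under eq_bigr => a _ do under eq_bigr => b _ do
  under eq_bigr => c _ do rewrite mulr_suml.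
under eq_bigr => a _ do rewrite exchange_big.
rewrite exchange_big; under eq_bigr => r _ do under eq_bigr => a _ do
  (rewrite exchange_big; under eq_bigr => b _ do rewrite exchange_big).
by do 5!(apply: eq_bigr => ? _); ring.
Qed.

Hypothesis HH : gcHopf_axioms H.

Lemma conv_assoc f g h : conv (conv f g) h = conv f (conv g h).
Proof.
have [_ [_ _ coassoc _ _]] := HH.
apply: functional_extensionality; apply: hB_ind => n i.
rewrite conv_convl conv_convr /= (sum_triangle _ (fun p q r s =>
  conv3_part f g h (fun a b c => sdeg p (fun x => comul (bas i) x c * comul x a b)) q r s)).
apply: eq_bigr => q _; apply: eq_bigr => r _.
apply: eq_sdeg => a; apply: eq_sdeg => b; apply: eq_sdeg => c.
have le_r : (r <= n - q)%N by rewrite -ltnS.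
have := coassoc (bas i) (bas a) (bas b) (bas c); rewrite /= subnKC // => -> //.
by rewrite -addnA subnKC // subnKC // -ltnS.
Qed.

Lemma conv_epsl f : conv (@eps K H) f = f.
Proof.
have [_ [_ _ _ counit _]] := HH.
apply: functional_extensionality; apply: hB_ind => n i.
rewrite /conv big_ord_recl big1 ?addr0 => [|p _]; last first.
  by rewrite /sdeg big1 // => a _; rewrite big1 // => b _; rewrite /eps mul0r mulr0.
rewrite /= subn0 exchange_sdeg -[RHS]sdeg_delta; apply: eq_sdeg => b.
rewrite -(proj1 (counit _ _ _)) // mulr_sdegl; apply: eq_sdeg => a.
by rewrite mulrCA mulrA.
Qed.

Lemma conv_epsr f : conv f (@eps K H) = f.
Proof.
have [_ [_ _ _ counit _]] := HH.
apply: functional_extensionality; apply: hB_ind => n i.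
rewrite /conv big_ord_recr big1 /= ?add0r => [|p _]; last first.
  rewrite /sdeg big1 // => a _; rewrite big1 // => b _.
  by rewrite /eps /= subn_eq0 leqNgt ltn_ord !mulr0.
rewrite subnn -[RHS]sdeg_delta; apply: eq_sdeg => a.
rewrite -(proj2 (counit _ _ _)) // mulr_sdegl; apply: eq_sdeg => b.
by rewrite mulrA mulrAC.
Qed.

Lemma sdeg_eps_one (psi : functional H) e : psi (@Defs.one K H) = 1 ->
  sdeg (deg e) (fun x => psi x * (eps e * (x == @Defs.one K H)%:R)) = eps e.
Proof.
case: e => -[|n] i psi1; rewrite /eps /=; last first.
  by rewrite /sdeg big1 // => x _; rewrite mul0r mulr0.
rewrite -[RHS]psi1 -(sdeg_delta (hone H)); apply: eq_sdeg => x.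
by rewrite mulrC; congr (_ * _); apply: mul1r.
Qed.

Lemma conv_cinvl psi : character psi -> conv (cinv psi) psi = @eps K H.
Proof.
case=> psi1 psiM; have [_ [_ _ _ _ [_ _ antipodeL _]]] := HH.
apply: functional_extensionality; apply: hB_ind => n i.
rewrite -(sdeg_eps_one (bas i) psi1).
under [RHS]eq_bigr => x _ do rewrite -antipodeL //.
rewrite /conv /cinv /sdeg /=.
under [RHS]eq_bigr => x _ do (rewrite mulr_sumr; under eq_bigr => p _ do
  (rewrite mulr_sumr; under eq_bigr => a _ do
    (rewrite mulr_sumr; under eq_bigr => b _ do rewrite mulr_sumr mulr_sumr))).
rewrite [RHS]exchange_big; apply: eq_bigr => p _.
rewrite [RHS]exchange_big; apply: eq_bigr => a _.
rewrite [RHS]exchange_big; apply: eq_bigr => b _.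
rewrite [RHS]exchange_big mulr_suml mulr_sumr; apply: eq_bigr => a' _.
have le_pn : (p <= n)%N by rewrite -ltnS.
rewrite -mulrA -psiM /= subnKC // mulr_sumr mulr_sumr; apply: eq_bigr => x _.
by ring.
Qed.

Lemma conv_cinvr psi : character psi -> conv psi (cinv psi) = @eps K H.
Proof.
case=> psi1 psiM; have [_ [_ _ _ _ [_ _ _ antipodeR]]] := HH.
apply: functional_extensionality; apply: hB_ind => n i.
rewrite -(sdeg_eps_one (bas i) psi1).
under [RHS]eq_bigr => x _ do rewrite -antipodeR //.
rewrite /conv /cinv /sdeg /=.
under [RHS]eq_bigr => x _ do (rewrite mulr_sumr; under eq_bigr => p _ do
  (rewrite mulr_sumr; under eq_bigr => a _ do
    (rewrite mulr_sumr; under eq_bigr => b _ do rewrite mulr_sumr mulr_sumr))).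
rewrite [RHS]exchange_big; apply: eq_bigr => p _.
rewrite [RHS]exchange_big; apply: eq_bigr => a _.
rewrite [RHS]exchange_big; apply: eq_bigr => b _.
rewrite [RHS]exchange_big !mulr_sumr; apply: eq_bigr => b' _.
have le_pn : (p <= n)%N by rewrite -ltnS.
rewrite (mulrCA (psi _)) -psiM /= subnKC // !mulr_sumr; apply: eq_bigr => x _.
by ring.
Qed.

Section CongruenceTransfer.
Variables (R : functional H -> functional H -> Prop) (phi psi phi' psi' : functional H).
Hypotheses (Hpsi : character psi) (Hpsi' : character psi').

Lemma conv_congr_quotl :
  (forall h f g, R f g -> R (conv h f) (conv h g)) ->
  (forall e, conv (cinv psi) phi e = conv (cinv psi') phi' e) ->
  R phi psi -> R phi' psi'.
Proof.
move=> Rconv /functional_extensionality eq_quot /(Rconv (cinv psi)) /(Rconv psi').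
by rewrite conv_cinvl // eq_quot -conv_assoc conv_cinvr // conv_epsl conv_epsr.
Qed.

Lemma conv_congr_quotr :
  (forall h f g, R f g -> R (conv f h) (conv g h)) ->
  (forall e, conv phi (cinv psi) e = conv phi' (cinv psi') e) ->
  R phi psi -> R phi' psi'.
Proof.
move=> Rconv /functional_extensionality eq_quot /(Rconv (cinv psi)) /(Rconv psi').
by rewrite conv_cinvr // eq_quot conv_assoc conv_cinvl // conv_epsr conv_epsl.
Qed.

End CongruenceTransfer.

Lemma conv_congr_quot (R : functional H -> functional H -> Prop) phi psi phi' psi' :
  (forall h f g, R f g -> R (conv h f) (conv h g)) ->
  (forall h f g, R f g -> R (conv f h) (conv g h)) ->
  character psi -> character psi' ->
  (forall e, conv (cinv psi) phi e = conv (cinv psi') phi' e) \/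
  (forall e, conv phi (cinv psi) e = conv phi' (cinv psi') e) ->
  R phi psi <-> R phi' psi'.
Proof.
move=> Rconvl Rconvr Hpsi Hpsi' [] eq_quot; split.
- exact: conv_congr_quotl.
- by apply: conv_congr_quotl => // e; rewrite eq_quot.
- exact: conv_congr_quotr.
- by apply: conv_congr_quotr => // e; rewrite eq_quot.
Qed.

End Convolution.

Section Subcoalgebras.
Variables (K : fieldType) (H : gcHopf K).
Implicit Types (f g h : functional H) (C : gsubspace H).

Definition tensor_eval p q (M : 'M[K]_(hdim H p, hdim H q)) f g : K :=
  \sum_(i < hdim H p) \sum_(j < hdim H q) M i j * (f (bas i) * g (bas j)).

Lemma fval_conv f g n (v : 'rV[K]_(hdim H n)) :
  fval (conv f g) v = \sum_(p < n.+1) tensor_eval (comulmx p v) f g.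
Proof.
rewrite /fval /conv /tensor_eval /sdeg /=.
under eq_bigr => k _ do (rewrite mulr_sumr; under eq_bigr => p _ do
  (rewrite mulr_sumr; under eq_bigr => i _ do rewrite mulr_sumr)).
rewrite exchange_big; apply: eq_bigr => p _.
rewrite exchange_big; apply: eq_bigr => i _.
rewrite exchange_big; apply: eq_bigr => j _.
by rewrite mxE mulr_suml; apply: eq_bigr => k _; rewrite mulrA.
Qed.

Lemma tensor_eval_mulmx r p q (X : 'M[K]_(r, hdim H p)) (Y : 'M[K]_(r, hdim H q)) f g :
  tensor_eval (X^T *m Y) f g = \sum_(k < r) fval f (row k X) * fval g (row k Y).
Proof.
rewrite /tensor_eval /fval.
under [RHS]eq_bigr => k _ do (rewrite mulr_suml; under eq_bigr => i _ do rewrite mulr_sumr).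
rewrite [RHS]exchange_big; apply: eq_bigr => i _.
rewrite [RHS]exchange_big; apply: eq_bigr => j _.
by rewrite mxE mulr_suml; apply: eq_bigr => k _; rewrite !mxE; ring.
Qed.

Lemma agree_on_conv C f f' g g' :
  agree_on f f' C -> agree_on g g' C -> agree_on (conv f g) (conv f' g') C.
Proof.
move=> [coalgC eq_f] [_ eq_g]; split => // n v vC; rewrite !fval_conv.
apply: eq_bigr => p _; have [r [X [Y [XC YC ->]]]] := coalgC n v vC p (ltn_ord p).
by rewrite !tensor_eval_mulmx; apply: eq_bigr => k _; rewrite eq_f ?eq_g.
Qed.

Lemma agree_on_convl C h f g : agree_on f g C -> agree_on (conv h f) (conv h g) C.
Proof. by move=> agree_fg; apply: (agree_on_conv _ agree_fg); case: agree_fg. Qed.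

Lemma agree_on_convr C h f g : agree_on f g C -> agree_on (conv f h) (conv g h) C.
Proof. by move=> agree_fg; apply: (agree_on_conv agree_fg); case: agree_fg. Qed.

Lemma in_tensorS m1 m2 (U U' : {vspace 'rV[K]_m1}) (V V' : {vspace 'rV[K]_m2}) M :
  (U <= U')%VS -> (V <= V')%VS -> in_tensor U V M -> in_tensor U' V' M.
Proof.
move=> sUU' sVV' [r [X [Y [XU YV ->]]]]; exists r, X, Y.
by split => // k; [apply: subvP sUU' _ _ | apply: subvP sVV' _ _].
Qed.

Lemma in_tensor0 m1 m2 (U : {vspace 'rV[K]_m1}) (V : {vspace 'rV[K]_m2}) :
  in_tensor U V 0.
Proof. by exists 0%N, 0, 0; split => [k|k|]; rewrite ?row0 ?mem0v // trmx0 mul0mx. Qed.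

Lemma in_tensorD m1 m2 (U : {vspace 'rV[K]_m1}) (V : {vspace 'rV[K]_m2}) M1 M2 :
  in_tensor U V M1 -> in_tensor U V M2 -> in_tensor U V (M1 + M2).
Proof.
move=> [r1 [X1 [Y1 [X1U Y1V ->]]]] [r2 [X2 [Y2 [X2U Y2V ->]]]].
exists (r1 + r2)%N, (col_mx X1 X2), (col_mx Y1 Y2).
split=> [k|k|]; last by rewrite tr_col_mx mul_row_col.
  by case: (split_ordP k) => j ->; rewrite ?rowKu ?rowKd.
by case: (split_ordP k) => j ->; rewrite ?rowKu ?rowKd.
Qed.

Lemma comulmx0 n p : comulmx p (0 : 'rV[K]_(hdim H n)) = 0.
Proof. by apply/matrixP => i j; rewrite !mxE big1 // => k _; rewrite mxE mul0r. Qed.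

Lemma comulmxD n p (v1 v2 : 'rV[K]_(hdim H n)) :
  comulmx p (v1 + v2) = comulmx p v1 + comulmx p v2.
Proof.
by apply/matrixP => i j; rewrite !mxE -big_split; apply: eq_bigr => k _; rewrite mxE mulrDl.
Qed.

Lemma fval0 f n : fval f (0 : 'rV[K]_(hdim H n)) = 0.
Proof. by rewrite /fval big1 // => k _; rewrite mxE mul0r. Qed.

Lemma fvalD f n (v1 v2 : 'rV[K]_(hdim H n)) : fval f (v1 + v2) = fval f v1 + fval f v2.
Proof. by rewrite /fval -big_split; apply: eq_bigr => k _; rewrite mxE mulrDl. Qed.

Lemma agree_on0 f g : agree_on f g (fun=> 0%VS).
Proof.
split=> n v; rewrite memv0 => /eqP->; last by rewrite !fval0.
by move=> p _; rewrite comulmx0; apply: in_tensor0.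
Qed.

Lemma agree_on_addv f g C1 C2 :
  agree_on f g C1 -> agree_on f g C2 -> agree_on f g (fun n => (C1 n + C2 n)%VS).
Proof.
move=> [coalg1 eq1] [coalg2 eq2].
split=> n v /memv_addP[v1 v1C [v2 v2C ->]]; last by rewrite !fvalD eq1 ?eq2.
move=> p le_pn; rewrite comulmxD; apply: in_tensorD.
  by apply: in_tensorS (coalg1 _ _ v1C _ le_pn); apply: addvSl.
by apply: in_tensorS (coalg2 _ _ v2C _ le_pn); apply: addvSr.
Qed.

Lemma agree_on_max_at f g n :
  exists M, agree_on f g M /\ forall C, agree_on f g C -> (C n <= M n)%VS.
Proof.
pose P k := exists2 C, agree_on f g C & \dim (C n) = k.
have [k [M agreeM dimM] maxk] : exists2 k, P k & forall j, P j -> (j <= k)%N.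
  apply: (@ex_maxn_bounded _ (hdim H n)) => [|k [C _ <-]].
    by exists 0%N, (fun=> 0%VS); [apply: agree_on0 | apply: dimv0].
  by rewrite (leq_trans (dimvS (subvf _))) // dimvf /dim /= mul1n.
exists M; split=> // C agreeC; apply: contraT => notCM.
have : (\dim (M n) < \dim (M n + C n))%N.
  by rewrite (ltn_leqif (dimv_leqif_sup (addvSl _ _))) subv_add subvv.
rewrite dimM ltnNge maxk //.
by exists (fun m => (M m + C m)%VS) => //; apply: agree_on_addv.
Qed.

(* For each n take an agreeing M_n that is largest in degree n; then n |-> M_n n
   is again a graded subcoalgebra, since Delta (M_n n) lies in
   M_n p (x) M_n (n - p), which is contained in M_p p (x) M_(n-p) (n - p). *)
Lemma is_S_exists f g : exists C, is_S f g C.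
Proof.
have [M maxM] := choice _ (agree_on_max_at f g).
have le_M C : agree_on f g C -> forall n, (C n <= M n n)%VS.
  by move=> agreeC n; apply: (maxM n).2.
exists (fun n => M n n); split=> [|C /le_M //]; split=> n v vM.
  move=> p le_pn; have [[coalgM _] _] := maxM n.
  by apply: in_tensorS (coalgM n v vM p le_pn); apply: le_M; apply: (maxM n).1.
by have [[_ ->]] := maxM n.
Qed.

End Subcoalgebras.

Section Ideals.
Variables (K : fieldType) (H : gcHopf K).
Implicit Types (f g h : functional H) (e : hB H) (J : functional H -> Prop).

Definition graded_diff_in J f g : Prop :=
  forall n, J (fun b => restr n f b - restr n g b).

Lemma restr_conv f g n e :
  restr n (conv f g) e = \sum_(p < n.+1) conv (restr p f) (restr (n - p) g) e.
Proof.
move: e; apply: hB_ind => m i; rewrite /restr /conv /=.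
have [<-|/eqP neq_mn] := eqVneq m n.
  rewrite exchange_big; apply: eq_bigr => p _.
  rewrite (bigD1 p) //= big1 => [|q neq_qp].
    by rewrite addr0; apply: eq_sdeg => a; apply: eq_sdeg => b; rewrite /= !eqxx.
  rewrite /sdeg big1 // => a _; rewrite big1 // => b _.
  case: eqP => [/val_inj eq_pq|_]; last by rewrite mul0r mulr0.
  by rewrite eq_pq eqxx in neq_qp.
apply/esym/big1 => p _; apply: big1 => q _; rewrite /sdeg big1 // => a _.
apply: big1 => b _ /=; case: eqP => [eq_qp|]; last by rewrite mul0r mulr0.
case: eqP => [eq_sub|]; last by rewrite !mulr0.
by move: (ltn_ord p) (ltn_ord q) eq_qp eq_sub neq_mn; lia.
Qed.

Lemma conv_subr f g h e : conv f (fun b => g b - h b) e = conv f g e - conv f h e.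
Proof.
rewrite /conv -sumrB; apply: eq_bigr => p _; rewrite /sdeg -sumrB; apply: eq_bigr => i _.
by rewrite -sumrB; apply: eq_bigr => j _; ring.
Qed.

Lemma conv_subl f g h e : conv (fun b => f b - g b) h e = conv f h e - conv g h e.
Proof.
rewrite /conv -sumrB; apply: eq_bigr => p _; rewrite /sdeg -sumrB; apply: eq_bigr => i _.
by rewrite -sumrB; apply: eq_bigr => j _; ring.
Qed.

Lemma restr_graded_dual n f : in_graded_dual (restr n f).
Proof. by exists n.+1 => b; rewrite /restr; case: eqP => // ->; rewrite ltnn. Qed.

Lemma ideal_sum J m (F : 'I_m -> functional H) :
  is_ideal J -> (forall k, J (F k)) -> J (fun b => \sum_(k < m) F k b).
Proof.
case=> _ J0 JD _ _; elim: m F => [|m IHm] F JF.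
  by have -> : (fun b => \sum_(k < 0) F k b) = (fun=> 0)
    by apply: functional_extensionality => b; rewrite big_ord0.
have -> : (fun b => \sum_(k < m.+1) F k b) =
    (fun b => (fun c => \sum_(k < m) F (widen_ord (leqnSn m) k) c) b + F ord_max b).
  by apply: functional_extensionality => b; rewrite big_ord_recr.
by apply: JD => //; apply: IHm.
Qed.

Lemma graded_diff_in_convl J f g h :
  is_ideal J -> graded_diff_in J f g -> graded_diff_in J (conv h f) (conv h g).
Proof.
move=> idealJ Jfg n; have [_ _ _ _ Jconv] := idealJ.
have -> : (fun b => restr n (conv h f) b - restr n (conv h g) b) = fun b =>
    \sum_(p < n.+1) conv (restr p h) (fun c => restr (n - p) f c - restr (n - p) g c) b.
  apply: functional_extensionality => b; rewrite !restr_conv -sumrB.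
  by apply: eq_bigr => p _; rewrite conv_subr.
by apply: ideal_sum => // p; apply: (Jconv _ _ (restr_graded_dual _ _) (Jfg _)).1.
Qed.

Lemma graded_diff_in_convr J f g h :
  is_ideal J -> graded_diff_in J f g -> graded_diff_in J (conv f h) (conv g h).
Proof.
move=> idealJ Jfg n; have [_ _ _ _ Jconv] := idealJ.
have -> : (fun b => restr n (conv f h) b - restr n (conv g h) b) = fun b =>
    \sum_(p < n.+1) conv (fun c => restr p f c - restr p g c) (restr (n - p) h) b.
  apply: functional_extensionality => b; rewrite !restr_conv -sumrB.
  by apply: eq_bigr => p _; rewrite conv_subl.
by apply: ideal_sum => // p; apply: (Jconv _ _ (restr_graded_dual _ _) (Jfg _)).2.
Qed.

End Ideals.

Theorem proposition5p5 (K : fieldType) (H : gcHopf K) (HH : gcHopf_axioms H)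
  (phi phi' psi psi' : functional H)
  (Hphi : character phi) (Hphi' : character phi')
  (Hpsi : character psi) (Hpsi' : character psi')
  (Hyp : (forall e, conv (cinv psi) phi e = conv (cinv psi') phi' e) \/
         (forall e, conv phi (cinv psi) e = conv phi' (cinv psi') e)) :
  (exists C, is_S phi psi C /\ is_S phi' psi' C) /\
  (forall f, in_I phi psi f <-> in_I phi' psi' f).
Proof.
have agreeE C : agree_on phi psi C <-> agree_on phi' psi' C.
  apply: (conv_congr_quot HH (R := fun f g => agree_on f g C)) => // h f g.
    exact: agree_on_convl.
  exact: agree_on_convr.
have diffE J : is_ideal J -> graded_diff_in J phi psi <-> graded_diff_in J phi' psi'.
  move=> idealJ; apply: (conv_congr_quot HH (R := graded_diff_in J)) => // h f g.
    exact: graded_diff_in_convl.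
  exact: graded_diff_in_convr.
split=> [|f]; last by split=> memI J idealJ /(diffE J idealJ); apply: memI.
have [C SC] := is_S_exists phi psi; exists C; split=> //.
have [/agreeE agreeC maxC] := SC.
by split=> // C' /agreeE; apply: maxC.
Qed.
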